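(* Let $n\ge2$ and let $N_1,N_2$ be $n\times n$ hermitian matrices over $\mathbb{F}_{q^2}$ of rank $n-1$ with $\operatorname{rank}(N_1-N_2)=1$. If $\{N_1+\lambda\mathbf{y}\mathbf{y}^\ast: 0\neq\lambda\in\mathbb{F}_q\}$ is a leaf of $N_1$, then $\{N_2+\lambda\mathbf{y}\mathbf{y}^\ast: 0\neq\lambda\in\mathbb{F}_q\}$ is a leaf of $N_2$.
   Context: $\mathbb{F}_{q^2}$ is the field with $q^2$ elements with involution $\bar x=x^q$, fixed field $\mathbb{F}_q$; $X^\ast=\bar X^\top$; hermitian means $A^\ast=A$. Leaf: if $A$ is hermitian of rank $s<n$ and $\mathbf{x}$ is not in the column space of $A$, then $\{A+\lambda\mathbf{x}\mathbf{x}^\ast: 0\ne\lambda\in\mathbb{F}_q\}$ is a leaf of $A$. *)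

From HB Require Import structures.
From mathcomp Require Import all_boot all_order all_algebra.
Set Implicit Arguments. Unset Strict Implicit. Unset Printing Implicit Defensive.
Import GRing.Theory.
Local Open Scope ring_scope.

(* F plays the role of F_{q^2}: a finite field with #|F| = q^2.
   The involution is x |-> x^q; its fixed field is F_q. *)
Definition conjq (F : finFieldType) (q : nat) (x : F) : F := x ^+ q.

Definition mxstar (F : finFieldType) (q : nat) (m n : nat) (X : 'M[F]_(m, n))
  : 'M[F]_(n, m) := map_mx (conjq q) X^T.

Definition herm_mx (F : finFieldType) (q n : nat) (A : 'M[F]_n) : bool :=
  mxstar q A == A.

Definition Fq_nonzero (F : finFieldType) (q : nat) : {set F} :=
  [set l : F | (l != 0) && (conjq q l == l)].

Definition leafset (F : finFieldType) (q n : nat) (A : 'M[F]_n) (x : 'cV[F]_n)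
  : {set 'M[F]_n} :=
  [set A + l *: (x *m mxstar q x) | l in Fq_nonzero F q].

(* x lies in the column space of A  (column space of A = row space of A^T) *)
Definition in_colspace (F : finFieldType) (n : nat) (A : 'M[F]_n) (x : 'cV[F]_n)
  : bool := (x^T <= A^T)%MS.

Definition is_leaf (F : finFieldType) (q n : nat) (A : 'M[F]_n)
  (S : {set 'M[F]_n}) : Prop :=
  [/\ herm_mx q A, (\rank A < n)%N &
      exists x : 'cV[F]_n, ~~ in_colspace A x /\ S = leafset q A x].

From HB Require Import structures.
From mathcomp Require Import all_boot all_order all_algebra.
From mathcomp Require Import pgroup abelian finfield.

Set Implicit Arguments.
Unset Strict Implicit.
Unset Printing Implicit Defensive.

Import GRing.Theory.
Local Open Scope ring_scope.

(** Since [N^T] is the entrywise conjugate of a hermitian [N], a nonzero row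
  [v] with [v N^T = 0] yields the nonzero column [v^*] with [N^T v^* = 0].
  Write [N2^T = N1^T - E] with [E] of rank one.  If the row space of [E] is not
  inside that of [N1^T], the two spaces are complementary; a nonzero [v] killing
  [N2^T] then kills [N1^T] and [E], so [v^*] is killed by the full-rank
  [col_mx N1^T E], which is absurd.  Hence the column space of [N2] lies in that
  of [N1].  Two vectors giving the same set [{A + l x x^*}] are proportional, so
  [y] avoids the column space of [N1], hence that of [N2]. *)

Section RankOneUpdate.
Variables (K : fieldType) (n : nat).
Implicit Types A E : 'M[K]_n.

Lemma rank1_cap_eq0 A E :
  \rank E = 1%N -> ~~ (E <= A)%MS -> (A :&: E = 0)%MS.
Proof.
move=> rE EnA; apply/eqP; rewrite -mxrank_eq0.
have := mxrankS (capmxSr A E); rewrite rE leq_eqVlt ltnS leqn0.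
case/orP=> [/eqP rAE | //]; case/negP: EnA.
have /mxrank_leqif_eq[_] := capmxSr A E; rewrite rAE rE eqxx.
by case/esym/andP=> _ /submx_trans; apply; apply: capmxSl.
Qed.

Lemma rank1_adds_row_full A E : (0 < n)%N ->
  \rank A = n.-1 -> \rank E = 1%N -> ~~ (E <= A)%MS -> row_full (A + E)%MS.
Proof.
move=> n_gt0 rA rE EnA; apply/eqP; have := mxrank_sum_cap A E.
by rewrite rank1_cap_eq0 // mxrank0 addn0 rA rE addn1 prednK.
Qed.

End RankOneUpdate.

Section HermitianMatrices.
Variables (F : finFieldType) (q : nat).
Hypothesis hF : #|F| = (q ^ 2)%N.

(* [q] is a power of the characteristic, so [x ^+ q] is an iterated Frobenius. *)
Lemma conjq_is_nmod_morphism : nmod_morphism (@conjq F q).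
Proof.
have [p _ pcharFp] := finPcharP F.
have q_pnat : p.-nat q.
  have := abelem_pgroup (fin_ring_pchar_abelem pcharFp).
  by rewrite /pgroup cardsT hF pnatX orbF.
have /andP[q_gt0 _] := q_pnat.
split=> [|x y]; first by rewrite /conjq expr0n eqn0Ngt q_gt0.
by apply: exprDn_pchar; rewrite (eq_pnat _ (pcharf_eq pcharFp)).
Qed.

Lemma conjq_is_monoid_morphism : monoid_morphism (@conjq F q).
Proof. by split=> [|x y]; rewrite /conjq ?expr1n // exprMn. Qed.

HB.instance Definition _ :=
  GRing.isNmodMorphism.Build F F (@conjq F q) conjq_is_nmod_morphism.
HB.instance Definition _ :=
  GRing.isMonoidMorphism.Build F F (@conjq F q) conjq_is_monoid_morphism.

Lemma mxstarM m n p (A : 'M[F]_(m, n)) (B : 'M_(n, p)) :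
  mxstar q (A *m B) = mxstar q B *m mxstar q A.
Proof. by rewrite /mxstar trmx_mul map_mxM. Qed.

Lemma mxrank_mxstar m n (A : 'M[F]_(m, n)) : \rank (mxstar q A) = \rank A.
Proof. by rewrite /mxstar mxrank_map mxrank_tr. Qed.

Lemma herm_mxstar_tr n (N : 'M[F]_n) : herm_mx q N -> mxstar q N^T = N^T.
Proof. by move/eqP=> {2}<-; rewrite /mxstar map_trmx. Qed.

Lemma herm_kerE n (N : 'M[F]_n) (v : 'rV_n) :
  herm_mx q N -> v *m N^T = 0 -> N^T *m mxstar q v = 0.
Proof.
move=> hN vN; rewrite -[N^T in LHS]herm_mxstar_tr // -mxstarM vN.
by rewrite /mxstar trmx0 map_mx0.
Qed.

Lemma tr_mul_mxstar_eqmx n (x : 'cV[F]_n) :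
  x != 0 -> ((x *m mxstar q x)^T :=: x^T)%MS.
Proof.
move=> x_nz; rewrite trmx_mul; apply: eqmxMfull.
rewrite /row_full mxrank_tr mxrank_mxstar eqn_leq rank_leq_col lt0n.
by rewrite mxrank_eq0.
Qed.

Lemma leafset_eq_sub n (A : 'M[F]_n) (x y : 'cV_n) :
  leafset q A x = leafset q A y -> (x^T <= y^T)%MS.
Proof.
move=> eq_leaf; have [-> | x_nz] := eqVneq x 0; first by rewrite trmx0 sub0mx.
have one_Fq : (1 : F) \in Fq_nonzero F q by rewrite inE oner_eq0 rmorph1 eqxx.
have : A + 1 *: (x *m mxstar q x) \in leafset q A y.
  by rewrite -eq_leaf; apply/imsetP; exists 1.
case/imsetP=> l _ /addrI; rewrite scale1r => xxy.
rewrite -(tr_mul_mxstar_eqmx x_nz) xxy linearZ /= trmx_mul.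
by apply: submx_trans (scalemx_sub _ (submx_refl _)) (submxMl _ _).
Qed.

Lemma herm_rank1_update_sub n (N1 N2 : 'M[F]_n) :
  (0 < n)%N -> herm_mx q N1 -> herm_mx q N2 ->
  \rank N1 = n.-1 -> \rank N2 = n.-1 -> \rank (N1 - N2) = 1%N ->
  (N2^T <= N1^T)%MS.
Proof.
move=> n_gt0 hN1 hN2 r1 r2 r12.
set E := N1^T - N2^T.
have rE : \rank E = 1%N by rewrite /E -linearB /= mxrank_tr.
have [EN1 | EnN1] := boolP (E <= N1^T)%MS.
  have -> : N2^T = N1^T - E by rewrite /E opprB addrC subrK.
  by rewrite addmx_sub ?eqmx_opp.
have cap0 := rank1_cap_eq0 rE EnN1.
have full := rank1_adds_row_full n_gt0 (etrans (mxrank_tr _) r1) rE EnN1.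
set v := nz_row (kermx N2^T).
have vN2 : v *m N2^T = 0 by apply/sub_kermxP/nz_row_sub.
have v_nz : v != 0.
  by rewrite nz_row_eq0 -mxrank_eq0 mxrank_ker mxrank_tr r2 subn_eq0 -ltnNge
    ltn_predL.
have vN1 : v *m N1^T = 0.
  apply/eqP; rewrite -submx0 -cap0 sub_capmx submxMl /=.
  by rewrite -[v *m N1^T]subr0 -vN2 -mulmxBr submxMl.
have u1 := herm_kerE hN1 vN1; have u2 := herm_kerE hN2 vN2.
have uE : E *m mxstar q v = 0 by rewrite mulmxBl u1 u2 subrr.
have /submxP[B B1] : (1%:M <= col_mx N1^T E)%MS by rewrite -addsmxE submx_full.
case/negP: v_nz; rewrite -mxrank_eq0 -mxrank_mxstar mxrank_eq0.
by rewrite -[mxstar q v]mul1mx B1 -mulmxA mul_col_mx u1 uE col_mx0 mulmx0.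
Qed.

End HermitianMatrices.

Theorem lemma3p6 (F : finFieldType) (q n : nat) (hF : #|F| = (q ^ 2)%N)
  (hn : (2 <= n)%N) (N1 N2 : 'M[F]_n) (y : 'cV[F]_n)
  (hN1 : herm_mx q N1) (hN2 : herm_mx q N2)
  (r1 : \rank N1 = n.-1) (r2 : \rank N2 = n.-1)
  (r12 : \rank (N1 - N2) = 1%N)
  (hleaf : is_leaf q N1 (leafset q N1 y)) :
  is_leaf q N2 (leafset q N2 y).
Proof.
have n_gt0 : (0 < n)%N by apply: leq_trans hn.
case: hleaf => _ _ [x [xnN1 leaf_xy]].
split; [by [] | by rewrite r2 ltn_predL | exists y; split=> //].
apply: contra xnN1; rewrite /in_colspace => yN2.
apply: submx_trans (leafset_eq_sub hF (esym leaf_xy)) _.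
exact: submx_trans yN2 (herm_rank1_update_sub hF n_gt0 hN1 hN2 r1 r2 r12).
Qed.
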